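(* Let $p\ge1$ and $\ell,\ell'\in(0,+\infty)$. Then the function \[ c\mapsto \mathscr{f}_p(\ell,\ell',c)=\int_{-\ell}^{\ell}\int_{-\ell'}^{\ell'}|x-y-c|^p\,\mathrm{d}y\,\mathrm{d}x,\qquad c\in\mathbb{R}, \] has $c=0$ as its unique minimiser. *)

From Stdlib Require Import Reals.
From Coquelicot Require Import Coquelicot.
Open Scope R_scope.

(* |t|^p for a real exponent p > 0, with the usual convention 0^p = 0
   (Stdlib's Rpower is exp (p * ln x), only meaningful for x > 0). *)
Definition abspow (t p : R) : R :=
  if Req_EM_T t 0 then 0 else Rpower (Rabs t) p.

Definition fp (p l l' c : R) : R :=
  RInt (fun x => RInt (fun y => abspow (x - y - c) p) (- l') l') (- l) l.

(* Substituting (x, y) -> (-x, -y) shows that f_p(l, l', .) is even, so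
   2 (f_p(l, l', c) - f_p(l, l', 0)) is the double integral of the second difference
   |t - c|^p + |t + c|^p - 2 |t|^p at t = x - y.  By convexity of |.|^p this
   continuous integrand is nonnegative, and at t = 0 it equals 2 |c|^p, which is
   positive for c <> 0; hence so is the double integral. *)

From Stdlib Require Import Reals Lra Psatz.
From Coquelicot Require Import Coquelicot.
Open Scope R_scope.

Lemma abspow_0 p : abspow 0 p = 0.
Proof. unfold abspow; destruct (Req_EM_T 0 0); [reflexivity|lra]. Qed.

Lemma abspow_gt_0 t p : t <> 0 -> 0 < abspow t p.
Proof. intros Ht; unfold abspow; destruct (Req_EM_T t 0); [lra|apply exp_pos]. Qed.

Lemma abspow_ge_0 t p : 0 <= abspow t p.
Proof.
  destruct (Req_dec t 0) as [->|Ht]; [rewrite abspow_0; lra|].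
  now left; apply abspow_gt_0.
Qed.

Lemma abspow_pos_eq u p : 0 < u -> abspow u p = Rpower u p.
Proof. intros Hu; unfold abspow; destruct (Req_EM_T u 0); [lra|now rewrite Rabs_pos_eq by lra]. Qed.

Lemma abspow_Rabs t p : abspow (Rabs t) p = abspow t p.
Proof.
  destruct (Req_dec t 0) as [->|Ht]; [now rewrite Rabs_R0|].
  unfold abspow; destruct (Req_EM_T (Rabs t) 0) as [H|]; [now apply Rabs_eq_0 in H|].
  destruct (Req_EM_T t 0); [lra|now rewrite Rabs_Rabsolu].
Qed.

Lemma abspow_opp t p : abspow (- t) p = abspow t p.
Proof. now rewrite <- abspow_Rabs, Rabs_Ropp, abspow_Rabs. Qed.

Lemma abspow_le u v p : 0 <= p -> 0 <= u <= v -> abspow u p <= abspow v p.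
Proof.
  intros Hp Huv; destruct (Req_dec u 0) as [->|Hu]; [rewrite abspow_0; apply abspow_ge_0|].
  rewrite !abspow_pos_eq by lra; apply Rle_Rpower_l; lra.
Qed.

Lemma continuous_abspow p t : 0 < p -> continuous (fun x => abspow x p) t.
Proof.
  intros Hp; destruct (Req_dec t 0) as [->|Ht].
  - apply continuity_pt_filterlim; intros eps Heps.
    (* |x|^p < eps as soon as |x| < eps^(1/p) *)
    exists (Rpower eps (/ p)); split; [apply exp_pos|].
    intros x [_ Hx]; simpl in *; unfold R_dist in *.
    rewrite abspow_0, Rminus_0_r, Rabs_pos_eq by apply abspow_ge_0.
    rewrite Rminus_0_r in Hx.
    destruct (Req_dec x 0) as [->|Hx0]; [now rewrite abspow_0|].
    rewrite <- abspow_Rabs, abspow_pos_eq by now apply Rabs_pos_lt.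
    rewrite <- (Rpower_1 eps Heps), <- (Rinv_l p), <- Rpower_mult by lra.
    apply Rlt_Rpower_l; [lra|split; [now apply Rabs_pos_lt|exact Hx]].
  - apply continuous_ext_loc with (g := fun x => exp (p * ln (Rabs x))).
    + exists (mkposreal _ (Rabs_pos_lt t Ht)); intros y Hy.
      unfold abspow; destruct (Req_EM_T y 0) as [->|]; [|reflexivity].
      exfalso; cbn in Hy; unfold AbsRing_ball, abs, minus, plus, opp in Hy; simpl in Hy.
      rewrite Rplus_0_l, Rabs_Ropp in Hy; lra.
    + apply (ex_derive_continuous (K := R_AbsRing) (V := R_NormedModule)).
      auto_derive; repeat split; auto using Rabs_pos_lt.
Qed.

Lemma Rpower_tangent_le p s u : 1 <= p -> 0 < s -> 0 < u ->
  Rpower s p + p * Rpower s (p - 1) * (u - s) <= Rpower u p.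
Proof.
  intros Hp Hs Hu.
  assert (Hder : forall x, 0 < x -> is_derive (fun x => Rpower x p) x (p * Rpower x (p - 1)))
    by (intros; apply is_derive_Reals, derivable_pt_lim_power; assumption).
  destruct (MVT_gen (fun x => Rpower x p) s u (fun x => p * Rpower x (p - 1)))
    as [xi [Hxi Hmvt]]; cbv zeta in *.
  - intros x Hx; apply Hder; pose proof (Rmin_glb_lt s u 0 Hs Hu); lra.
  - intros x Hx; apply derivable_continuous_pt; exists (p * Rpower x (p - 1)).
    apply is_derive_Reals, Hder; pose proof (Rmin_glb_lt s u 0 Hs Hu); lra.
  - (* u^p - s^p = p xi^(p-1) (u - s), and xi^(p-1) - s^(p-1) has the sign of u - s *)
    assert (Hslope : 0 <= (Rpower xi (p - 1) - Rpower s (p - 1)) * (u - s)).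
    { unfold Rmin, Rmax in Hxi; destruct (Rle_dec s u).
      - assert (Rpower s (p - 1) <= Rpower xi (p - 1)) by (apply Rle_Rpower_l; lra).
        nra.
      - assert (Rpower xi (p - 1) <= Rpower s (p - 1)) by (apply Rle_Rpower_l; lra).
        nra. }
    assert (0 <= p * ((Rpower xi (p - 1) - Rpower s (p - 1)) * (u - s)))
      by (apply Rmult_le_pos; lra).
    lra.
Qed.

Lemma abspow_tangent_le p s u : 1 <= p -> 0 < s -> 0 <= u ->
  Rpower s p + p * Rpower s (p - 1) * (u - s) <= abspow u p.
Proof.
  intros Hp Hs Hu; destruct (Req_dec u 0) as [->|Hu0].
  - rewrite abspow_0.
    assert (Hsplit : Rpower s p = Rpower s (p - 1) * s)
      by (rewrite <- (Rpower_1 s) at 3 by lra; rewrite <- Rpower_plus; f_equal; ring).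
    assert (0 <= Rpower s (p - 1) * s * (p - 1))
      by (apply Rmult_le_pos; [apply Rmult_le_pos; [left; apply exp_pos|]|]; lra).
    nra.
  - rewrite abspow_pos_eq by lra; apply Rpower_tangent_le; lra.
Qed.

Lemma abspow_midpoint_le p a b : 1 <= p -> 0 <= a -> 0 <= b ->
  2 * abspow ((a + b) / 2) p <= abspow a p + abspow b p.
Proof.
  intros Hp Ha Hb; set (s := (a + b) / 2).
  destruct (Req_dec s 0) as [Hs0|Hs0].
  - assert (a = 0 /\ b = 0) as [-> ->] by (unfold s in Hs0; lra).
    rewrite Hs0, abspow_0; lra.
  - assert (Hs : 0 < s) by (unfold s in *; lra).
    pose proof (abspow_tangent_le p s a Hp Hs Ha).
    pose proof (abspow_tangent_le p s b Hp Hs Hb).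
    rewrite (abspow_pos_eq s p Hs).
    assert (a - s + (b - s) = 0) by (unfold s; field).
    nra.
Qed.

Lemma abspow_midpoint_convex p t c : 1 <= p ->
  2 * abspow t p <= abspow (t - c) p + abspow (t + c) p.
Proof.
  intros Hp; rewrite <- (abspow_Rabs t), <- (abspow_Rabs (t - c)), <- (abspow_Rabs (t + c)).
  apply Rle_trans with (2 * abspow ((Rabs (t - c) + Rabs (t + c)) / 2) p).
  - apply Rmult_le_compat_l, abspow_le; [lra|lra|split; [apply Rabs_pos|]].
    unfold Rabs; repeat destruct Rcase_abs; lra.
  - apply abspow_midpoint_le; auto using Rabs_pos.
Qed.

Lemma ex_RInt_of_continuous (f : R -> R) a b : (forall t, continuous f t) -> ex_RInt f a b.
Proof. intros Hf; apply (ex_RInt_continuous (V := R_CompleteNormedModule)); auto. Qed.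

Lemma RInt_comp_sub (f : R -> R) z a b : ex_RInt f (z - b) (z - a) ->
  RInt (fun y => f (z - y)) a b = RInt f (z - b) (z - a).
Proof.
  intros Hf; apply ex_RInt_swap in Hf.
  rewrite <- (opp_RInt_swap f) by exact Hf.
  apply is_RInt_unique.
  apply (is_RInt_ext (fun y => opp (scal (-1) (f (-1 * y + z))))).
  { intros y _; unfold opp, scal; simpl; unfold mult; simpl.
    replace (-1 * y + z) with (z - y) by ring; ring. }
  apply (is_RInt_opp (V := R_NormedModule)), (is_RInt_comp_lin (V := R_NormedModule)).
  replace (-1 * a + z) with (z - a) by ring; replace (-1 * b + z) with (z - b) by ring.
  apply (RInt_correct (V := R_CompleteNormedModule)), Hf.
Qed.

Lemma RInt_comp_opp (f : R -> R) a b : ex_RInt f (- b) (- a) ->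
  RInt (fun y => f (- y)) a b = RInt f (- b) (- a).
Proof.
  intros Hf; replace (- b) with (0 - b) in * by ring; replace (- a) with (0 - a) in * by ring.
  rewrite <- (RInt_comp_sub f 0 a b Hf).
  apply RInt_ext; intros y _; f_equal; ring.
Qed.

Lemma continuous_RInt_bounds (f : R -> R) (u v : R -> R) x :
  (forall t, continuous f t) -> continuous u x -> continuous v x ->
  continuous (fun x => RInt f (u x) (v x)) x.
Proof.
  intros Hf Hu Hv; apply (continuous_comp_2 u v (fun a b => RInt f a b)); [exact Hu|exact Hv|].
  apply (continuous_RInt (V := R_NormedModule) f), filter_forall; intros [a b].
  apply (RInt_correct (V := R_CompleteNormedModule)), ex_RInt_of_continuous, Hf.
Qed.

Lemma RInt_second_difference (f1 f2 f : R -> R) a b :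
  ex_RInt f1 a b -> ex_RInt f2 a b -> ex_RInt f a b ->
  RInt (fun x => f1 x + f2 x - 2 * f x) a b = RInt f1 a b + RInt f2 a b - 2 * RInt f a b.
Proof.
  intros H1 H2 H.
  apply is_RInt_unique, (is_RInt_ext (fun x => minus (plus (f1 x) (f2 x)) (scal 2 (f x))));
    [reflexivity|].
  apply (is_RInt_minus (V := R_NormedModule)); [apply (is_RInt_plus (V := R_NormedModule))|
    apply (is_RInt_scal (V := R_NormedModule))];
    apply (RInt_correct (V := R_CompleteNormedModule)); assumption.
Qed.

Lemma RInt_gt_0_of_point (f : R -> R) a b x0 : a < x0 < b ->
  (forall x, a <= x <= b -> continuous f x) -> (forall x, a <= x <= b -> 0 <= f x) ->
  0 < f x0 -> 0 < RInt f a b.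
Proof.
  intros Hx0 Hcont Hpos Hfx0.
  assert (Hc0 : continuity_pt f x0) by (apply continuity_pt_filterlim, Hcont; lra).
  destruct (Hc0 (f x0) Hfx0) as [d [Hd Hnear]].
  set (a' := Rmax a (x0 - d / 2)); set (b' := Rmin b (x0 + d / 2)).
  assert (a <= a' < x0 /\ x0 < b' <= b) as [Ha' Hb'].
  { unfold a', b', Rmax, Rmin; destruct Rle_dec, Rle_dec; lra. }
  assert (Hex : forall c e, a <= c <= e -> e <= b -> ex_RInt f c e).
  { intros c e Hc He; apply (ex_RInt_continuous (V := R_CompleteNormedModule)).
    intros t Ht; apply Hcont; rewrite Rmin_left, Rmax_right in Ht; lra. }
  rewrite <- (RInt_Chasles f a a' b), <- (RInt_Chasles f a' b' b) by (apply Hex; lra).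
  assert (0 <= RInt f a a') by (apply RInt_ge_0; [lra|apply Hex; lra|intros; apply Hpos; lra]).
  assert (0 <= RInt f b' b) by (apply RInt_ge_0; [lra|apply Hex; lra|intros; apply Hpos; lra]).
  assert (0 < RInt f a' b').
  { apply RInt_gt_0; [lra| |intros; apply Hcont; lra].
    intros x Hx; destruct (Req_dec x x0) as [->|Hne]; [exact Hfx0|].
    assert (Hfx : Rabs (f x - f x0) < f x0).
    { apply (Hnear x); split; [split; [exact I|congruence]|].
      simpl; unfold R_dist; apply Rabs_def1;
        unfold a', b', Rmax, Rmin in *; destruct Rle_dec, Rle_dec; lra. }
    apply Rabs_def2 in Hfx; lra. }
  unfold plus; simpl; lra.
Qed.

Section BoxIntegral.

Variables l l' : R.

Definition box_integral (g : R -> R) (c : R) : R :=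
  RInt (fun x => RInt (fun y => g (x - y - c)) (- l') l') (- l) l.

Lemma continuous_integrand (g : R -> R) x c y : (forall t, continuous g t) ->
  continuous (fun y => g (x - y - c)) y.
Proof.
  intros Hg; apply (continuous_comp (fun y => x - y - c) g); [|apply Hg].
  apply (ex_derive_continuous (K := R_AbsRing) (V := R_NormedModule)); auto_derive; exact I.
Qed.

Lemma inner_integral_eq (g : R -> R) c x : (forall t, continuous g t) ->
  RInt (fun y => g (x - y - c)) (- l') l' = RInt g (x - c - l') (x - c + l').
Proof.
  intros Hg; replace (x - c + l') with (x - c - - l') by ring.
  rewrite <- RInt_comp_sub by (apply ex_RInt_of_continuous, Hg).
  apply RInt_ext; intros y _; f_equal; ring.
Qed.

Lemma continuous_inner_integral (g : R -> R) c x : (forall t, continuous g t) ->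
  continuous (fun x => RInt (fun y => g (x - y - c)) (- l') l') x.
Proof.
  intros Hg; apply (continuous_ext (fun x => RInt g (x - c - l') (x - c + l'))).
  { intros; symmetry; apply inner_integral_eq, Hg. }
  apply continuous_RInt_bounds; [exact Hg| |];
    apply (ex_derive_continuous (K := R_AbsRing) (V := R_NormedModule)); auto_derive; exact I.
Qed.

Lemma ex_RInt_inner_integral (g : R -> R) c a b : (forall t, continuous g t) ->
  ex_RInt (fun x => RInt (fun y => g (x - y - c)) (- l') l') a b.
Proof.
  intros Hg; apply (ex_RInt_continuous (V := R_CompleteNormedModule)).
  intros; apply continuous_inner_integral, Hg.
Qed.

Lemma box_integral_opp (g : R -> R) c : (forall t, continuous g t) ->
  (forall t, g (- t) = g t) -> box_integral g (- c) = box_integral g c.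
Proof.
  intros Hg Heven.
  assert (Hrefl : forall a b, RInt g (- b) (- a) = RInt g a b).
  { intros a b; rewrite <- RInt_comp_opp by (apply ex_RInt_of_continuous, Hg).
    apply RInt_ext; intros; apply Heven. }
  unfold box_integral.
  (* the substitution (x, y) -> (-x, -y) *)
  transitivity (RInt (fun x => RInt (fun y => g (- x - y - c)) (- l') l') (- l) l).
  - apply RInt_ext; intros x _; rewrite !inner_integral_eq by exact Hg.
    rewrite <- Hrefl; f_equal; ring.
  - rewrite (RInt_comp_opp (fun x => RInt (fun y => g (x - y - c)) (- l') l'))
      by (apply ex_RInt_inner_integral, Hg).
    now rewrite Ropp_involutive.
Qed.

Lemma box_integral_second_difference (g : R -> R) c : (forall t, continuous g t) ->
  box_integral g c + box_integral g (- c) - 2 * box_integral g 0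
  = box_integral (fun t => g (t - c) + g (t + c) - 2 * g t) 0.
Proof.
  intros Hg; unfold box_integral.
  rewrite <- RInt_second_difference by (apply ex_RInt_inner_integral, Hg).
  apply RInt_ext; intros x _.
  rewrite <- RInt_second_difference
    by (apply ex_RInt_of_continuous; intros; apply continuous_integrand, Hg).
  apply RInt_ext; intros y _.
  replace (x - y - 0 - c) with (x - y - c) by ring.
  replace (x - y - 0 + c) with (x - y - - c) by ring.
  reflexivity.
Qed.

Lemma box_integral_gt_0 (h : R -> R) : 0 < l -> 0 < l' ->
  (forall t, continuous h t) -> (forall t, 0 <= h t) -> 0 < h 0 -> 0 < box_integral h 0.
Proof.
  intros Hl Hl' Hcont Hpos Hh0.
  assert (Hinner : forall x, 0 <= RInt (fun y => h (x - y - 0)) (- l') l').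
  { intros x; apply RInt_ge_0; [lra| |intros; apply Hpos].
    apply ex_RInt_of_continuous; intros; apply continuous_integrand, Hcont. }
  apply (RInt_gt_0_of_point _ _ _ 0); [lra|intros; apply continuous_inner_integral, Hcont
    |intros; apply Hinner|].
  apply (RInt_gt_0_of_point _ _ _ 0);
    [lra|intros; apply continuous_integrand, Hcont|intros; apply Hpos|].
  now replace (0 - 0 - 0) with 0 by ring.
Qed.

End BoxIntegral.

Lemma continuous_second_difference (g : R -> R) c t : (forall t, continuous g t) ->
  continuous (fun t => g (t - c) + g (t + c) - 2 * g t) t.
Proof.
  intros Hg.
  assert (Hshift : forall a, continuous (fun t => g (t + a)) t).
  { intros a; apply (continuous_comp (fun t => t + a) g); [|apply Hg].
    apply (ex_derive_continuous (K := R_AbsRing) (V := R_NormedModule)); auto_derive; exact I. }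
  apply (continuous_ext (fun t => minus (plus (g (t + - c)) (g (t + c))) (scal 2 (g t)))).
  { intros; reflexivity. }
  apply (continuous_minus (V := R_NormedModule)).
  - apply (continuous_plus (V := R_NormedModule)); apply Hshift.
  - apply (continuous_scal_r (V := R_NormedModule)), Hg.
Qed.

Lemma box_integral_0_lt (g : R -> R) l l' c : 0 < l -> 0 < l' ->
  (forall t, continuous g t) -> (forall t, g (- t) = g t) ->
  (forall t s, 2 * g t <= g (t - s) + g (t + s)) -> (forall c, c <> 0 -> g 0 < g c) ->
  c <> 0 -> box_integral l l' g 0 < box_integral l l' g c.
Proof.
  intros Hl Hl' Hg Heven Hconv Hmin Hc.
  pose proof (box_integral_second_difference l l' g c Hg) as Hdiff.
  rewrite box_integral_opp in Hdiff by assumption.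
  assert (0 < box_integral l l' (fun t => g (t - c) + g (t + c) - 2 * g t) 0); [|lra].
  apply box_integral_gt_0; [assumption|assumption|intros; apply continuous_second_difference, Hg
    |intros t; specialize (Hconv t c); lra|].
  rewrite Rminus_0_l, Rplus_0_l, Heven; specialize (Hmin c Hc); lra.
Qed.

Theorem mainTheorem12 (p l l' : R) (hp : 1 <= p) (hl : 0 < l) (hl' : 0 < l') :
  (forall c : R, fp p l l' 0 <= fp p l l' c) /\
  (forall c : R, fp p l l' c = fp p l l' 0 -> c = 0).
Proof.
  assert (Hlt : forall c, c <> 0 -> fp p l l' 0 < fp p l l' c).
  { intros c Hc; apply (box_integral_0_lt (fun t => abspow t p)); auto.
    - intros; apply continuous_abspow; lra.
    - intros; apply abspow_opp.
    - intros; apply abspow_midpoint_convex, hp.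
    - intros; rewrite abspow_0; apply abspow_gt_0; assumption. }
  split; intros c; destruct (Req_dec c 0) as [->|Hc].
  - lra.
  - pose proof (Hlt c Hc); lra.
  - reflexivity.
  - pose proof (Hlt c Hc); lra.
Qed.
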